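(* Let $a,b,c\in\mathbb{R}^n$. Then the set $\{X\in\mathbb{S}^n_+:\ a^\top Xc\ge 0,\ b^\top Xc\ge 0\}$ is rank-one generated.
   Context: $\mathbb{S}^n_+$ is the cone of real symmetric positive semidefinite $n\times n$ matrices. A closed convex cone $\mathcal{S}\subseteq\mathbb{S}^n_+$ is rank-one generated (ROG) if $\mathcal{S}=\mathrm{conv}(\mathcal{S}\cap\{xx^\top:x\in\mathbb{R}^n\})$. *)

From HB Require Import structures.
From mathcomp Require Import all_boot all_order all_algebra.
From mathcomp Require Import all_classical all_reals all_analysis.
Set Implicit Arguments. Unset Strict Implicit. Unset Printing Implicit Defensive.
Import Order.TTheory GRing.Theory Num.Theory.
Import numFieldNormedType.Exports.
Local Open Scope classical_set_scope.
Local Open Scope ring_scope.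

Definition psd (R : realType) (n : nat) (X : 'M[R]_n) : Prop :=
  X^T = X /\ forall v : 'cV[R]_n, 0 <= (v^T *m X *m v) 0 0.

Definition rank_one_psd (R : realType) (n : nat) (X : 'M[R]_n) : Prop :=
  exists x : 'cV[R]_n, X = x *m x^T.

Definition conv_hull (R : realType) (n : nat) (A : set 'M[R]_n) : set 'M[R]_n :=
  [set X | exists (k : nat) (w : 'I_k -> R) (Y : 'I_k -> 'M[R]_n),
     (forall i, 0 <= w i) /\ \sum_(i < k) w i = 1 /\
     (forall i, A (Y i)) /\ X = \sum_(i < k) w i *: Y i].

Definition closed_convex_cone (R : realType) (n : nat) (S : set 'M[R]_n) : Prop :=
  closed S /\ S 0 /\
  (forall X Y, S X -> S Y -> S (X + Y)) /\
  (forall (t : R) X, 0 <= t -> S X -> S (t *: X)).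

Definition ROG (R : realType) (n : nat) (S : set 'M[R]_n) : Prop :=
  closed_convex_cone S /\ S `<=` [set X | psd X] /\
  S = conv_hull (S `&` [set X | rank_one_psd X]).

Definition two_bilinear_set (R : realType) (n : nat) (a b c : 'cV[R]_n)
  : set 'M[R]_n :=
  [set X | psd X /\ 0 <= (a^T *m X *m c) 0 0 /\ 0 <= (b^T *m X *m c) 0 0].

From HB Require Import structures.
From mathcomp Require Import all_boot all_order all_algebra.
From mathcomp Require Import all_classical all_reals all_analysis.
From mathcomp Require Import ring.
Set Implicit Arguments. Unset Strict Implicit. Unset Printing Implicit Defensive.
Import Order.TTheory GRing.Theory Num.Theory.
Import numFieldNormedType.Exports.
Local Open Scope classical_set_scope.
Local Open Scope ring_scope.

(** Let X be in the set and g := c^T X c >= 0.  With u := X c / sqrt g, the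
    Schur complement X - u u^T is again positive semidefinite and kills c, so
    it is a sum of rank-one matrices x x^T with c^T x = 0; these satisfy both
    constraints with equality.  The remaining term u u^T satisfies them too,
    since a^T u u^T c = (a^T X c) g / g >= 0, and likewise for b.  Hence every
    element of the cone is a finite sum of its own rank-one elements, which for
    a convex cone means that it is rank-one generated. *)

Section BilinearForm.
Variables (R : comPzRingType) (n : nat).
Implicit Types (X Y : 'M[R]_n) (u v x f : 'cV[R]_n).

Definition qform X u v : R := (u^T *m X *m v) 0 0.
Definition vdot u v : R := (u^T *m v) 0 0.

Lemma vdotC u v : vdot u v = vdot v u.
Proof.
by rewrite /vdot [v^T *m u](_ : _ = (u^T *m v)^T) ?mxE // trmx_mul trmxK.
Qed.

Lemma qformD X Y u v : qform (X + Y) u v = qform X u v + qform Y u v.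
Proof. by rewrite /qform mulmxDr mulmxDl mxE. Qed.

Lemma qformB X Y u v : qform (X - Y) u v = qform X u v - qform Y u v.
Proof. by rewrite /qform mulmxBr mulmxBl !mxE. Qed.

Lemma qformZ t X u v : qform (t *: X) u v = t * qform X u v.
Proof. by rewrite /qform -scalemxAr -scalemxAl mxE. Qed.

Lemma qform0 u v : qform 0 u v = 0.
Proof. by rewrite /qform mulmx0 mul0mx mxE. Qed.

Lemma qformDl X u1 u2 v : qform X (u1 + u2) v = qform X u1 v + qform X u2 v.
Proof. by rewrite /qform linearD /= !mulmxDl mxE. Qed.

Lemma qformZl X t u v : qform X (t *: u) v = t * qform X u v.
Proof. by rewrite /qform linearZ /= -!scalemxAl mxE. Qed.

Lemma qformDr X u v1 v2 : qform X u (v1 + v2) = qform X u v1 + qform X u v2.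
Proof. by rewrite /qform mulmxDr mxE. Qed.

Lemma qformZr X t u v : qform X u (t *: v) = t * qform X u v.
Proof. by rewrite /qform -scalemxAr mxE. Qed.

Lemma qform_tr X u v : qform X^T u v = qform X v u.
Proof.
rewrite /qform [u^T *m X^T *m v](_ : _ = (v^T *m X *m u)^T) ?mxE //.
by rewrite !trmx_mul trmxK mulmxA.
Qed.

Lemma qform_sym X u v : X^T = X -> qform X u v = qform X v u.
Proof. by move=> sX; rewrite -qform_tr sX. Qed.

Lemma qform_comb X u v s t : X^T = X ->
  qform X (s *: u + t *: v) (s *: u + t *: v) =
  s ^+ 2 * qform X u u + 2 * s * t * qform X u v + t ^+ 2 * qform X v v.
Proof.
by move=> sX; rewrite qformDl !qformDr !qformZl !qformZr (qform_sym u v sX); ring.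
Qed.

Lemma qform_rank1 x u v : qform (x *m x^T) u v = vdot u x * vdot x v.
Proof. by rewrite /qform /vdot !mulmxA -mulmxA [LHS]mxE big_ord1. Qed.

Lemma qform_mulmx X u f : qform X u f = vdot u (X *m f).
Proof. by rewrite /qform /vdot mulmxA. Qed.

Lemma mulmx_eq0_qform X f : (forall u, qform X u f = 0) -> X *m f = 0.
Proof.
move=> Xf0; apply/matrixP => i j; rewrite (ord1 j) [RHS]mxE -(Xf0 (delta_mx i 0)).
by rewrite qform_mulmx /vdot trmx_delta -rowE [RHS]mxE.
Qed.

End BilinearForm.

Section Semidefinite.
Variables (R : realType) (n : nat).
Implicit Types (X Y : 'M[R]_n) (u v w x e f : 'cV[R]_n).

Lemma psd_ge0 X v : psd X -> 0 <= qform X v v.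
Proof. by case=> _; apply. Qed.

Lemma psd_rank1 x : psd (x *m x^T).
Proof.
split=> [|v]; first by rewrite trmx_mul trmxK.
by rewrite -/(qform _ v v) qform_rank1 (vdotC x v) -expr2 sqr_ge0.
Qed.

Lemma psd0 : psd (0 : 'M[R]_n).
Proof. by split=> [|v]; rewrite ?trmx0 // -/(qform _ v v) qform0. Qed.

Lemma psdD X Y : psd X -> psd Y -> psd (X + Y).
Proof.
move=> [sX X_ge0] [sY Y_ge0]; split=> [|v]; first by rewrite linearD /= sX sY.
by rewrite -/(qform _ v v) qformD addr_ge0 //; [exact: X_ge0 | exact: Y_ge0].
Qed.

Lemma psdZ t X : 0 <= t -> psd X -> psd (t *: X).
Proof.
move=> t_ge0 [sX X_ge0]; split=> [|v]; first by rewrite linearZ /= sX.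
by rewrite -/(qform _ v v) qformZ mulr_ge0 //; exact: X_ge0.
Qed.

Lemma psd_qform_eq0 X e : psd X -> qform X e e = 0 -> X *m e = 0.
Proof.
move=> [sX X_ge0] Xee0; apply: mulmx_eq0_qform => u.
have [//|uXe_neq0] := eqVneq (qform X u e) 0.
(* Along the line [u + t e] the form is affine in [t], so it takes the value [-1]. *)
pose t := - (qform X u u + 1) / (2 * qform X u e).
have := X_ge0 (1 *: u + t *: e).
rewrite -/(qform _ _ _) qform_comb // Xee0.
have -> : 1 ^+ 2 * qform X u u + 2 * 1 * t * qform X u e + t ^+ 2 * 0 = -1.
  by rewrite /t; field.
by rewrite oppr_ge0 ler10.
Qed.

(** When [qform X e e = 0] the pivot is [0] (as [0^-1 = 0]) and [deflate X e = X];
    the statements below do not need to exclude this case. *)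
Definition pivot X e := (Num.sqrt (qform X e e))^-1 *: (X *m e).
Definition deflate X e := X - pivot X e *m (pivot X e)^T.

Lemma qform_pivot X e w v : 0 <= qform X e e ->
  qform (pivot X e *m (pivot X e)^T) w v = qform X w e * qform X v e / qform X e e.
Proof.
move=> Xee_ge0; rewrite qform_rank1 (vdotC _ v).
have vdot_pivot z : vdot z (pivot X e) = (Num.sqrt (qform X e e))^-1 * qform X z e.
  by rewrite /vdot -scalemxAr mxE -/(vdot z (X *m e)) -qform_mulmx.
by rewrite !vdot_pivot mulrACA -invfM -expr2 sqr_sqrtr // mulrC.
Qed.

Lemma qform_deflate X e w v : 0 <= qform X e e ->
  qform (deflate X e) w v = qform X w v - qform X w e * qform X v e / qform X e e.
Proof. by move=> Xee_ge0; rewrite qformB qform_pivot. Qed.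

Lemma add_pivot_deflate X e : pivot X e *m (pivot X e)^T + deflate X e = X.
Proof. by rewrite addrC subrK. Qed.

Lemma psd_deflate X e : psd X -> psd (deflate X e).
Proof.
move=> psdX; have Xee_ge0 := psd_ge0 e psdX.
split=> [|v]; first by rewrite /deflate linearB /= trmx_mul trmxK psdX.1.
rewrite -/(qform _ v v) qform_deflate // subr_ge0.
have [->|Xee_neq0] := eqVneq (qform X e e) 0; first by rewrite invr0 mulr0 psd_ge0.
pose t := - qform X v e / qform X e e.
have := psd_ge0 (1 *: v + t *: e) psdX.
rewrite qform_comb ?psdX.1 //.
have -> : 1 ^+ 2 * qform X v v + 2 * 1 * t * qform X v e + t ^+ 2 * qform X e e =
    qform X v v - qform X v e * qform X v e / qform X e e.
  by rewrite /t; field.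
by rewrite subr_ge0.
Qed.

Lemma deflate_ker X e f : psd X -> X *m f = 0 -> deflate X e *m f = 0.
Proof.
move=> psdX Xf0; apply: mulmx_eq0_qform => w.
rewrite qform_deflate ?psd_ge0 // (qform_sym f e psdX.1) !qform_mulmx Xf0.
by rewrite /vdot !mulmx0 !mxE mulr0 mul0r subr0.
Qed.

Lemma deflate_ker_self X e : psd X -> deflate X e *m e = 0.
Proof.
move=> psdX; apply: psd_qform_eq0; first exact: psd_deflate.
rewrite qform_deflate ?psd_ge0 //.
have [->|Xee_neq0] := eqVneq (qform X e e) 0; first by rewrite mulr0 mul0r subrr.
by rewrite mulfK // subrr.
Qed.

Lemma psd_sum_rank1 X : psd X -> exists s : seq 'cV[R]_n, X = \sum_(x <- s) x *m x^T.
Proof.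
suff gen (js : seq 'I_n) (Y : 'M[R]_n) : psd Y ->
    (forall j, j \notin js -> Y *m (delta_mx j 0 : 'cV_n) = 0) ->
  exists s : seq 'cV[R]_n, Y = \sum_(x <- s) x *m x^T.
  by move=> psdX; apply: (gen (enum 'I_n)) => // j; rewrite mem_enum.
elim: js Y => [|j js IH] Y psdY Y_ker.
  exists [::]; apply/matrixP => i k; rewrite big_nil mxE.
  by have := congr1 (fun M : 'cV_n => M i 0) (Y_ker k isT); rewrite -colE !mxE.
have [||s defY] := IH (deflate Y (delta_mx j 0)); first exact: psd_deflate.
  move=> k k_notin_js; have [->|k_neq_j] := eqVneq k j; first exact: deflate_ker_self.
  by apply: deflate_ker; rewrite // Y_ker // in_cons negb_or k_neq_j.
by exists (pivot Y (delta_mx j 0) :: s); rewrite big_cons -defY add_pivot_deflate.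
Qed.

Lemma psd_ker_sum_rank1 Y c : psd Y -> Y *m c = 0 ->
  exists2 s : seq 'cV[R]_n, Y = \sum_(x <- s) x *m x^T & forall x, x \in s -> vdot c x = 0.
Proof.
move=> psdY Yc0; have [s defY] := psd_sum_rank1 psdY; exists s => // x x_in_s.
have Ycc0 : qform Y c c = 0 by rewrite qform_mulmx Yc0 /vdot mulmx0 mxE.
have : \sum_(z <- s) vdot c z ^+ 2 = qform Y c c.
  rewrite defY (big_morph (fun M => qform M c c) (fun M N => qformD M N c c) (qform0 c c)).
  by apply: eq_bigr => z _; rewrite qform_rank1 (vdotC z c) expr2.
move/eqP; rewrite Ycc0 psumr_eq0 => [/allP/(_ x x_in_s)|z _]; last exact: sqr_ge0.
by rewrite sqrf_eq0 => /eqP.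
Qed.

End Semidefinite.

Section RankOneGenerated.
Variables (R : realType) (n : nat).
Implicit Types (K A : set 'M[R]_n) (X : 'M[R]_n).

Lemma rank_one_psdZ t X : 0 <= t -> rank_one_psd X -> rank_one_psd (t *: X).
Proof.
move=> t_ge0 [x ->]; exists (Num.sqrt t *: x).
by rewrite linearZ /= -scalemxAl -scalemxAr scalerA -expr2 sqr_sqrtr.
Qed.

Lemma conv_hull_sum A (s : seq 'M[R]_n) :
  A 0 -> (forall t X, 0 <= t -> A X -> A (t *: X)) -> (forall X, X \in s -> A X) ->
  conv_hull A (\sum_(X <- s) X).
Proof.
(* Padding [s] with [0] makes the family nonempty, so the weights [1/k] exist. *)
move=> A0 AZ As; pose s0 := 0 :: s; pose k := size s0.
have k_neq0 : k%:R != 0 :> R by rewrite pnatr_eq0.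
exists k, (fun=> k%:R^-1), (fun i => k%:R *: s0`_i); split=> [i|].
  by rewrite invr_ge0 ler0n.
split; first by rewrite sumr_const card_ord -[LHS]mulr_natr mulVf.
split=> [i|].
  apply: AZ; first exact: ler0n.
  have /predU1P[->|] := mem_nth 0 (ltn_ord i); [exact: A0 | exact: As].
have -> : \sum_(X <- s) X = \sum_(X <- s0) X by rewrite big_cons add0r.
rewrite (big_nth 0) big_mkord.
by apply: eq_bigr => i _; rewrite scalerA mulVf // scale1r.
Qed.

Lemma conv_hull_sub_cone K A : closed_convex_cone K -> A `<=` K -> conv_hull A `<=` K.
Proof.
move=> [_ [K0 [KD KZ]]] AK _ [k [w [Y [w_ge0 [_ [AY ->]]]]]].
by apply: (big_ind K) => // i _; apply/KZ/AK/AY.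
Qed.

Lemma ROG_sum_rank1 K : closed_convex_cone K -> K `<=` [set X | psd X] ->
  (forall X, K X -> exists2 s : seq 'cV[R]_n,
     X = \sum_(x <- s) x *m x^T & forall x, x \in s -> K (x *m x^T)) ->
  ROG K.
Proof.
move=> coneK K_psd K_sum; split=> //; split=> //.
apply/seteqP; split; last by apply: conv_hull_sub_cone => // X [].
move=> X /K_sum [s -> Ks]; rewrite -(big_map (fun x => x *m x^T) predT id).
have [_ [K0 [_ KZ]]] := coneK.
apply: conv_hull_sum => [|t Y t_ge0 [KY r1Y]|Y /mapP [x x_in_s ->]].
- by split=> //; exists 0; rewrite mul0mx.
- by split; [exact: KZ | exact: rank_one_psdZ].
- by split; [exact: Ks | exists x].
Qed.

End RankOneGenerated.

Section Closedness.
Variables (R : realType) (n : nat).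

Lemma qform_continuous (u v : 'cV[R]_n) : continuous (fun X : 'M[R]_n => qform X u v).
Proof.
have -> : (fun X : 'M[R]_n => qform X u v) =
    (fun X => \sum_(j < n) \sum_(i < n) u i 0 * v j 0 * X i j).
  apply/funext => X; rewrite /qform mxE; apply: eq_bigr => j _.
  by rewrite mxE big_distrl; apply: eq_bigr => i _; rewrite !mxE mulrAC.
apply: continuous_big => [|j _]; first exact: add_continuous.
apply: continuous_big => [|i _]; first exact: add_continuous.
move=> X; exact (continuousM (@cst_continuous _ _ (u i 0 * v j 0) X)
                             (@coord_continuous R n n i j X)).
Qed.

Lemma closed_qform_ge0 (u v : 'cV[R]_n) : closed [set X : 'M[R]_n | 0 <= qform X u v].
Proof. exact ((continuous_closedP _).1 (@qform_continuous u v) _ (@closed_ge R 0)). Qed.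

Lemma closed_psd : closed [set X : 'M[R]_n | psd X].
Proof.
have -> : [set X : 'M[R]_n | psd X] =
    \bigcap_(ij in [set: 'I_n * 'I_n]) [set X : 'M[R]_n | X ij.2 ij.1 - X ij.1 ij.2 = 0] `&`
    \bigcap_(v in [set: 'cV[R]_n]) [set X | 0 <= qform X v v].
  apply/seteqP; split=> [X [sX X_ge0]|X [sX X_ge0]].
    by split=> [[i j] _ /=|v _]; [rewrite -[in X j i]sX mxE subrr | exact: X_ge0].
  split=> [|v]; last exact: X_ge0.
  by apply/matrixP => i j; rewrite mxE; apply: subr0_eq (sX (i, j) I).
apply: closedI; last by apply: closed_bigI => v _; exact: closed_qform_ge0.
apply: closed_bigI => -[i j] _.
apply: (continuous_closedP (fun X : 'M[R]_n => X j i - X i j)).1 _ (@closed_eq R 0) => X.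
by apply: continuousB; exact: coord_continuous.
Qed.

End Closedness.

Section TwoBilinearSet.
Variables (R : realType) (n : nat) (a b c : 'cV[R]_n).
Local Notation S := (two_bilinear_set a b c).

Lemma two_bilinear_set_cone : closed_convex_cone S.
Proof.
split; first by apply: closedI; [exact: closed_psd | apply: closedI; exact: closed_qform_ge0].
split; first by split; [exact: psd0 | rewrite -!/(qform _ _ _) !qform0].
split=> [X Y [psdX [aX bX]] [psdY [aY bY]]|t X t_ge0 [psdX [aX bX]]].
  by split; [exact: psdD | rewrite -!/(qform _ _ _) !qformD !addr_ge0].
by split; [exact: psdZ | rewrite -!/(qform _ _ _) !qformZ !mulr_ge0].
Qed.

Lemma two_bilinear_set_orth x : vdot c x = 0 -> S (x *m x^T).
Proof.
move=> cx0; split; first exact: psd_rank1.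
by rewrite -!/(qform _ _ _) !qform_rank1 (vdotC x c) cx0 !mulr0.
Qed.

Lemma two_bilinear_set_pivot X : S X -> S (pivot X c *m (pivot X c)^T).
Proof.
move=> [psdX [aX bX]]; have Xcc_ge0 := psd_ge0 c psdX.
split; first exact: psd_rank1.
by rewrite -!/(qform _ _ _) !qform_pivot // !mulr_ge0 ?invr_ge0.
Qed.

Lemma two_bilinear_set_sum_rank1 X : S X ->
  exists2 s : seq 'cV[R]_n, X = \sum_(x <- s) x *m x^T & forall x, x \in s -> S (x *m x^T).
Proof.
move=> SX; have psdX := SX.1.
have [s defY s_orth] := psd_ker_sum_rank1 (psd_deflate c psdX) (deflate_ker_self c psdX).
exists (pivot X c :: s); first by rewrite big_cons -defY add_pivot_deflate.
move=> x /predU1P[->|/s_orth]; first exact: two_bilinear_set_pivot.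
exact: two_bilinear_set_orth.
Qed.

End TwoBilinearSet.

Theorem corollary3p6 (R : realType) (n : nat) (a b c : 'cV[R]_n) :
  ROG (two_bilinear_set a b c).
Proof.
apply: ROG_sum_rank1.
- exact: two_bilinear_set_cone.
- by move=> X [].
- exact: two_bilinear_set_sum_rank1.
Qed.
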